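(* Let $j$ be an integer, $a=2^j$, $b=2^{j+1}$, let $n>1$ be an integer, and let $s_1,\dots,s_n$ and $w_1,\dots,w_n$ be the nodes and weights of the $n$-point Gauss–Legendre quadrature on $[a,b]$. Then for every $\alpha\in(0,1)$ and every $t>0$, $$\left|\int_a^b e^{-ts}s^{\alpha-1}\,ds-\sum_{k=1}^n w_k s_k^{\alpha-1}e^{-s_k t}\right|<2\sqrt{2}\,\pi\, a^{\alpha}\left(\frac{e^{1/e}}{4}\right)^{2n}.$$
   Context: The $n$-point Gauss–Legendre quadrature on $[a,b]$ is the rule $\int_a^b\varphi(s)\,ds\approx\sum_{k=1}^n w_k\varphi(s_k)$ with nodes at the zeros of the degree-$n$ Legendre polynomial mapped to $[a,b]$, exact for all polynomials of degree at most $2n-1$. *)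

From Stdlib Require Import Reals Lra Lia List.
From Coquelicot Require Import Coquelicot.
Open Scope R_scope.

(* Legendre polynomials on [-1,1] via Bonnet's recurrence:
   P_0 = 1, P_1 = x, (m+1) P_{m+1} = (2m+1) x P_m - m P_{m-1}. *)
Fixpoint legendre (n : nat) (x : R) : R :=
  match n with
  | O => 1
  | S m =>
      match m with
      | O => x
      | S k => ((2 * INR m + 1) * x * legendre m x - INR m * legendre k x)
               / (INR m + 1)
      end
  end.

Definition qsum (n : nat) (f : nat -> R) : R :=
  fold_right Rplus 0 (map f (seq 0 n)).

(* (s k, w k)_{k<n} is the n-point Gauss–Legendre rule on [a,b]:
   the n nodes are pairwise distinct zeros of the degree-n Legendre polynomial
   mapped affinely to [a,b], and the rule is exact for all polynomials of
   degree <= 2n-1 (equivalently, for the monomials x^i, i < 2n). *)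
Definition is_gauss_legendre (n : nat) (a b : R) (s w : nat -> R) : Prop :=
  (forall k l, (k < n)%nat -> (l < n)%nat -> s k = s l -> k = l) /\
  (forall k, (k < n)%nat -> legendre n ((2 * s k - a - b) / (b - a)) = 0) /\
  (forall i, (i < 2 * n)%nat ->
     RInt (fun x => x ^ i) a b = qsum n (fun k => w k * (s k) ^ i)).

From Stdlib Require Import Reals Lra Lia List Classical.
From Coquelicot Require Import Coquelicot.
Open Scope R_scope.

(* Interpolate f(x) = e^(-tx) x^(alpha-1) at 2n points: the Gauss nodes s_k and
   the n zeros of the monic Chebyshev polynomial q of an interval [c - h, c + h]
   slightly larger than [a, b], with c chosen so that the two node sets are
   disjoint.  The interpolant p has degree < 2n, so the rule integrates it exactly,
   and it agrees with f at the s_k; the error is therefore the integral of f - p.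
   By Rolle, f - p = w q f^(2n)(xi) / (2n)! with w = prod (x - s_k), and
   2 |w q| <= w^2 + q^2, while the integral of w^2 is at most that of q^2 since w
   is orthogonal to all polynomials of degree < n.  Finally
   |f^(m)(x)| <= m! x^(alpha-1-m) and |q| <= 2 (h/2)^n on [a, b]; with a = 2^j,
   b = 2a and h = 11a/20 all nodes lie in [9a/10, 21a/10], so the error is at most
   4 (9/10)^(alpha-1) a^alpha (11/36)^(2n), and 11/36 < e^(1/e)/4. *)

(* Coquelicot states these for arbitrary normed modules; [apply] cannot
   unify that form with goals over [R], so we record the [R] instances. *)
Lemma is_derive_plus_R f g x df dg : is_derive f x df -> is_derive g x dg ->
  is_derive (fun y => f y + g y) x (df + dg).
Proof. intros Hf Hg. exact (is_derive_plus f g x df dg Hf Hg). Qed.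

Lemma is_derive_minus_R f g x df dg : is_derive f x df -> is_derive g x dg ->
  is_derive (fun y => f y - g y) x (df - dg).
Proof. intros Hf Hg. exact (is_derive_minus f g x df dg Hf Hg). Qed.

Lemma is_derive_mult_R f g x df dg : is_derive f x df -> is_derive g x dg ->
  is_derive (fun y => f y * g y) x (df * g x + f x * dg).
Proof. intros Hf Hg. exact (is_derive_mult f g x df dg Hf Hg Rmult_comm). Qed.

Lemma continuous_minus_R (f g : R -> R) x : continuous f x -> continuous g x ->
  continuous (fun y => f y - g y) x.
Proof. intros Hf Hg. exact (continuous_minus f g x Hf Hg). Qed.

Lemma ex_RInt_continuous_R (f : R -> R) a b : a <= b ->
  (forall x, a <= x <= b -> continuous f x) -> ex_RInt f a b.
Proof.
  intros Hab Hf. apply (ex_RInt_continuous (V := R_CompleteNormedModule)).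
  rewrite Rmin_left, Rmax_right; auto.
Qed.

Lemma ex_RInt_plus_R f g a b : ex_RInt f a b -> ex_RInt g a b ->
  ex_RInt (fun y => f y + g y) a b.
Proof. intros Hf Hg. exact (ex_RInt_plus f g a b Hf Hg). Qed.

Lemma ex_RInt_scal_R f a b k : ex_RInt f a b -> ex_RInt (fun y => k * f y) a b.
Proof. intros Hf. exact (ex_RInt_scal f a b k Hf). Qed.

Lemma RInt_plus_R f g a b : ex_RInt f a b -> ex_RInt g a b ->
  RInt (fun y => f y + g y) a b = RInt f a b + RInt g a b.
Proof. intros Hf Hg. exact (RInt_plus f g a b Hf Hg). Qed.

Lemma RInt_minus_R f g a b : ex_RInt f a b -> ex_RInt g a b ->
  RInt (fun y => f y - g y) a b = RInt f a b - RInt g a b.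
Proof. intros Hf Hg. exact (RInt_minus f g a b Hf Hg). Qed.

Lemma RInt_scal_R f a b k : ex_RInt f a b -> RInt (fun y => k * f y) a b = k * RInt f a b.
Proof. intros Hf. exact (RInt_scal f a b k Hf). Qed.

Lemma qsum_0 f : qsum 0 f = 0.
Proof. reflexivity. Qed.

Lemma qsum_recr n f : qsum (S n) f = qsum n f + f n.
Proof.
  unfold qsum. rewrite seq_S, map_app, fold_right_app. simpl.
  induction (map f (seq 0 n)); simpl; lra.
Qed.

Lemma qsum_recl n f : qsum (S n) f = f 0%nat + qsum n (fun i => f (S i)).
Proof. induction n; [unfold qsum; simpl; lra|]. rewrite qsum_recr, IHn, (qsum_recr n). lra. Qed.

Lemma qsum_ext n f g : (forall i, (i < n)%nat -> f i = g i) -> qsum n f = qsum n g.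
Proof. induction n; intros H; [reflexivity|]. rewrite !qsum_recr, IHn, H; auto. Qed.

Lemma qsum_plus n f g : qsum n (fun i => f i + g i) = qsum n f + qsum n g.
Proof. induction n; [unfold qsum; simpl; lra|]. rewrite !qsum_recr, IHn. lra. Qed.

Lemma qsum_scal n c f : qsum n (fun i => c * f i) = c * qsum n f.
Proof. induction n; [unfold qsum; simpl; lra|]. rewrite !qsum_recr, IHn. lra. Qed.

Lemma qsum_eq_0 n f : (forall i, (i < n)%nat -> f i = 0) -> qsum n f = 0.
Proof.
  induction n; intros H; [reflexivity|].
  rewrite qsum_recr, IHn, H; [ring | lia | intros; apply H; lia].
Qed.

Lemma qsum_single n k g : (k < n)%nat ->
  (forall i, (i < n)%nat -> i <> k -> g i = 0) -> qsum n g = g k.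
Proof.
  induction n; intros Hk H; [lia|]. rewrite qsum_recr.
  destruct (Nat.eq_dec k n) as [->|Hkn].
  - rewrite qsum_eq_0; [lra|]. intros; apply H; lia.
  - rewrite IHn, (H n); try lia; [lra|]. intros; apply H; lia.
Qed.

Lemma qsum_swap n m (F : nat -> nat -> R) :
  qsum n (fun i => qsum m (F i)) = qsum m (fun j => qsum n (fun i => F i j)).
Proof.
  induction n.
  - symmetry. apply qsum_eq_0. intros; apply qsum_0.
  - rewrite (qsum_recr n), IHn, <- qsum_plus. apply qsum_ext.
    intros j _. rewrite (qsum_recr n (fun i => F i j)). reflexivity.
Qed.

Lemma qsum_abs n f : Rabs (qsum n f) <= qsum n (fun i => Rabs (f i)).
Proof.
  induction n; [rewrite !qsum_0, Rabs_R0; lra|].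
  rewrite !qsum_recr. eapply Rle_trans; [apply Rabs_triang | lra].
Qed.

Lemma qsum_le n f g : (forall i, (i < n)%nat -> f i <= g i) -> qsum n f <= qsum n g.
Proof.
  induction n; intros H; [unfold qsum; simpl; lra|]. rewrite !qsum_recr.
  apply Rplus_le_compat; [apply IHn; intros|]; apply H; lia.
Qed.

Lemma qsum_sum_f_R0 n f : qsum (S n) f = sum_f_R0 f n.
Proof. induction n; [unfold qsum; simpl; lra|]. rewrite qsum_recr, IHn. reflexivity. Qed.

Definition lprod (l : list nat) (h : nat -> R) : R := fold_right Rmult 1 (map h l).

Lemma lprod_eq_0 l h j : In j l -> h j = 0 -> lprod l h = 0.
Proof.
  unfold lprod. induction l as [|i l IH]; simpl; [tauto|].
  intros [<-|Hj] Hh; [rewrite Hh | rewrite IH]; auto; ring.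
Qed.

Lemma lprod_eq_1 l h : (forall j, In j l -> h j = 1) -> lprod l h = 1.
Proof. unfold lprod. induction l; simpl; intros H; [reflexivity|]. rewrite H, IHl; auto; ring. Qed.

Lemma lprod_neq_0 l h : (forall j, In j l -> h j <> 0) -> lprod l h <> 0.
Proof.
  unfold lprod. induction l; simpl; intros H; [lra|].
  apply Rmult_integral_contrapositive_currified; auto.
Qed.

Definition poly_lt (d : nat) (f : R -> R) : Prop :=
  exists c : nat -> R, forall x, f x = qsum d (fun i => c i * x ^ i).

Definition monic_poly (m : nat) (f : R -> R) : Prop :=
  exists r, poly_lt m r /\ forall x, f x = x ^ m + r x.

Lemma poly_lt_ext d f g : poly_lt d f -> (forall x, f x = g x) -> poly_lt d g.
Proof. intros [c Hc] H. exists c. intros x. rewrite <- H. apply Hc. Qed.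

Lemma poly_lt_0 d : poly_lt d (fun _ => 0).
Proof. exists (fun _ => 0). intros x. rewrite qsum_eq_0; auto. intros; ring. Qed.

Lemma poly_lt_plus d f g : poly_lt d f -> poly_lt d g -> poly_lt d (fun x => f x + g x).
Proof.
  intros [c Hc] [c' Hc']. exists (fun i => c i + c' i). intros x.
  rewrite Hc, Hc', <- qsum_plus. apply qsum_ext; intros; ring.
Qed.

Lemma poly_lt_scal d k f : poly_lt d f -> poly_lt d (fun x => k * f x).
Proof.
  intros [c Hc]. exists (fun i => k * c i). intros x.
  rewrite Hc, <- qsum_scal. apply qsum_ext; intros; ring.
Qed.

Lemma poly_lt_minus d f g : poly_lt d f -> poly_lt d g -> poly_lt d (fun x => f x - g x).
Proof.
  intros Hf Hg. apply poly_lt_ext with (fun x => f x + -1 * g x); [|intros; ring].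
  apply poly_lt_plus; [|apply poly_lt_scal]; assumption.
Qed.

Lemma poly_lt_le d d' f : (d <= d')%nat -> poly_lt d f -> poly_lt d' f.
Proof.
  intros Hd [c Hc]. exists (fun i => if (i <? d)%nat then c i else 0). intros x.
  rewrite Hc. replace d' with (d + (d' - d))%nat by lia.
  induction (d' - d)%nat as [|k IHk].
  - rewrite Nat.add_0_r. apply qsum_ext. intros i Hi.
    destruct (Nat.ltb_spec i d); [reflexivity | lia].
  - rewrite Nat.add_succ_r, qsum_recr, <- IHk.
    destruct (Nat.ltb_spec (d + k) d); [lia | ring].
Qed.

Lemma poly_lt_monomial d i k : (i < d)%nat -> poly_lt d (fun x => k * x ^ i).
Proof.
  intros Hi. exists (fun j => if (j =? i)%nat then k else 0). intros x.
  rewrite (qsum_single d i), Nat.eqb_refl; auto.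
  intros j _ Hj. apply Nat.eqb_neq in Hj. rewrite Hj. ring.
Qed.

Lemma poly_lt_const d k : (0 < d)%nat -> poly_lt d (fun _ => k).
Proof.
  intros Hd. apply poly_lt_ext with (fun x => k * x ^ 0); [|intros; simpl; ring].
  apply poly_lt_monomial; assumption.
Qed.

Lemma poly_lt_affine u v : poly_lt 2 (fun x => u * x + v).
Proof.
  apply poly_lt_ext with (fun x => u * x ^ 1 + v * x ^ 0); [|intros; simpl; ring].
  apply poly_lt_plus; apply poly_lt_monomial; lia.
Qed.

Lemma poly_lt_qsum d k (F : nat -> R -> R) :
  (forall i, (i < k)%nat -> poly_lt d (F i)) -> poly_lt d (fun x => qsum k (fun i => F i x)).
Proof.
  induction k; intros H.
  - apply poly_lt_0.
  - apply poly_lt_ext with (fun x => qsum k (fun i => F i x) + F k x).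
    + apply poly_lt_plus; [apply IHk; intros|]; apply H; lia.
    + intros; rewrite qsum_recr; reflexivity.
Qed.

Lemma poly_lt_x_mult d g : poly_lt d g -> poly_lt (S d) (fun x => x * g x).
Proof.
  intros [c Hc]. exists (fun i => match i with O => 0 | S j => c j end). intros x.
  rewrite qsum_recl, Hc, <- qsum_scal. simpl. rewrite Rmult_0_l, Rplus_0_l.
  apply qsum_ext; intros; ring.
Qed.

Lemma poly_lt_pow_mult d k g : poly_lt d g -> poly_lt (k + d) (fun x => x ^ k * g x).
Proof.
  intros Hg. induction k as [|k IHk]; simpl.
  - apply poly_lt_ext with g; [assumption | intros; ring].
  - apply poly_lt_ext with (fun x => x * (x ^ k * g x)); [|intros; ring].
    apply poly_lt_x_mult; assumption.
Qed.

Lemma poly_lt_mult d1 d2 f g : poly_lt d1 f -> poly_lt d2 g ->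
  poly_lt (d1 + d2 - 1) (fun x => f x * g x).
Proof.
  intros [c Hc] Hg.
  apply poly_lt_ext with (fun x => qsum d1 (fun i => c i * (x ^ i * g x))).
  - apply poly_lt_qsum. intros i Hi. apply poly_lt_scal.
    apply poly_lt_le with (i + d2)%nat; [lia|]. apply poly_lt_pow_mult; assumption.
  - intros x. rewrite Hc, Rmult_comm, <- qsum_scal. apply qsum_ext; intros; ring.
Qed.

Lemma poly_lt_lprod (l : list nat) (h : nat -> R -> R) :
  (forall j, In j l -> poly_lt 2 (h j)) ->
  poly_lt (S (length l)) (fun x => lprod l (fun j => h j x)).
Proof.
  unfold lprod. induction l as [|j l IH]; simpl; intros H.
  - apply poly_lt_const; lia.
  - replace (S (S (length l))) with (2 + S (length l) - 1)%nat by lia.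
    apply poly_lt_mult; auto.
Qed.

Lemma monic_poly_lt m f : monic_poly m f -> poly_lt (S m) f.
Proof.
  intros [r [Hr Hf]]. apply poly_lt_ext with (fun x => 1 * x ^ m + r x); [|intros; rewrite Hf; ring].
  apply poly_lt_plus; [apply poly_lt_monomial; lia | apply poly_lt_le with m; auto].
Qed.

Lemma monic_poly_mult m k f g : monic_poly m f -> monic_poly k g ->
  monic_poly (m + k) (fun x => f x * g x).
Proof.
  intros [r [Hr Hf]] [r' [Hr' Hg]].
  exists (fun x => x ^ m * r' x + x ^ k * r x + r x * r' x). split.
  - repeat apply poly_lt_plus.
    + apply poly_lt_pow_mult; assumption.
    + rewrite Nat.add_comm. apply poly_lt_pow_mult; assumption.
    + apply poly_lt_le with (m + k - 1)%nat; [lia | apply poly_lt_mult; assumption].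
  - intros x. rewrite Hf, Hg, pow_add. ring.
Qed.

Lemma monic_poly_lprod (l : list nat) (z : nat -> R) :
  monic_poly (length l) (fun x => lprod l (fun j => x - z j)).
Proof.
  unfold lprod. induction l as [|j l IH]; simpl.
  - exists (fun _ => 0). split; [apply poly_lt_0 | intros; simpl; ring].
  - apply (monic_poly_mult 1 (length l) (fun x => x - z j)); [|exact IH].
    exists (fun _ => - z j). split; [apply poly_lt_const; lia | intros; simpl; ring].
Qed.

Definition derive_chain (D : R -> Prop) (G : nat -> R -> R) : Prop :=
  forall i x, D x -> is_derive (G i) x (G (S i) x).

Fixpoint falling (k i : nat) : R :=
  match i with O => 1 | S i' => falling k i' * INR (k - i') end.

Lemma falling_gt k i : (k < i)%nat -> falling k i = 0.
Proof.
  induction i; intros H; [lia|]. simpl. destruct (Nat.eq_dec k i) as [->|Hki].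
  - rewrite Nat.sub_diag. simpl. ring.
  - rewrite IHi; [ring | lia].
Qed.

Lemma falling_S k i : falling (S k) (S i) = INR (S k) * falling k i.
Proof.
  induction i; [simpl; ring|].
  change (falling (S k) (S (S i))) with (falling (S k) (S i) * INR (S k - S i)).
  rewrite IHi. simpl. ring.
Qed.

Lemma falling_diag m : falling m m = INR (Factorial.fact m).
Proof.
  induction m; [reflexivity|]. rewrite falling_S, IHm.
  change (Factorial.fact (S m)) with (S m * Factorial.fact m)%nat. rewrite mult_INR. reflexivity.
Qed.

Lemma is_derive_falling_monomial c k i x :
  is_derive (fun y => c * falling k i * y ^ (k - i)) x (c * falling k (S i) * x ^ (k - S i)).
Proof.
  assert (H := derivable_pt_lim_pow x (k - i)). apply is_derive_Reals in H.
  apply (is_derive_scal _ _ (c * falling k i)) in H.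
  replace (c * falling k (S i) * x ^ (k - S i))
    with (c * falling k i * (INR (k - i) * x ^ Init.Nat.pred (k - i))); [exact H|].
  simpl falling. replace (Init.Nat.pred (k - i)) with (k - S i)%nat by lia. ring.
Qed.

Lemma is_derive_qsum d (F : nat -> R -> R) F' x :
  (forall k, (k < d)%nat -> is_derive (F k) x (F' k)) ->
  is_derive (fun y => qsum d (fun k => F k y)) x (qsum d F').
Proof.
  induction d; intros H.
  - exact (is_derive_const 0 x).
  - apply is_derive_ext with (fun y => qsum d (fun k => F k y) + F d y).
    + intros; rewrite qsum_recr; reflexivity.
    + rewrite qsum_recr. apply is_derive_plus_R; [apply IHd; intros|]; apply H; lia.
Qed.

Lemma poly_lt_derive_chain d f : poly_lt d f -> exists G, derive_chain (fun _ => True) G /\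
  (forall x, G O x = f x) /\ (forall i x, (d <= i)%nat -> G i x = 0).
Proof.
  intros [c Hc]. exists (fun i x => qsum d (fun k => c k * falling k i * x ^ (k - i))).
  split; [|split].
  - intros i x _. apply is_derive_qsum. intros; apply is_derive_falling_monomial.
  - intros x. rewrite Hc. apply qsum_ext. intros. rewrite Nat.sub_0_r. simpl. ring.
  - intros i x H. apply qsum_eq_0. intros k Hk. rewrite falling_gt; [ring | lia].
Qed.

Lemma monic_derive_chain m f : monic_poly m f -> exists G, derive_chain (fun _ => True) G /\
  (forall x, G O x = f x) /\ (forall x, G m x = INR (Factorial.fact m)).
Proof.
  intros [r [Hr Hf]]. destruct (poly_lt_derive_chain _ _ Hr) as [G [HG [HG0 HGd]]].
  exists (fun i x => 1 * falling m i * x ^ (m - i) + G i x). split; [|split].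
  - intros i x _. apply is_derive_plus_R; [apply is_derive_falling_monomial | apply HG; auto].
  - intros x. rewrite Hf, HG0, Nat.sub_0_r. simpl. ring.
  - intros x. rewrite HGd, falling_diag, Nat.sub_diag; auto. simpl; ring.
Qed.

Lemma poly_lt_continuous d f x : poly_lt d f -> continuous f x.
Proof.
  intros H. destruct (poly_lt_derive_chain _ _ H) as [G [HG [HG0 _]]].
  apply continuous_ext with (G O); [exact HG0|].
  apply (ex_derive_continuous (G O)). eexists. apply HG; auto.
Qed.

Lemma ex_RInt_poly_lt d f a b : poly_lt d f -> ex_RInt f a b.
Proof.
  intros H. apply (ex_RInt_continuous (V := R_CompleteNormedModule)).
  intros; eapply poly_lt_continuous; eauto.
Qed.

Lemma ex_RInt_qsum d (F : nat -> R -> R) a b : (forall i, (i < d)%nat -> ex_RInt (F i) a b) ->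
  ex_RInt (fun x => qsum d (fun i => F i x)) a b.
Proof.
  induction d; intros H.
  - exact (ex_RInt_const a b 0).
  - apply ex_RInt_ext with (fun x => qsum d (fun i => F i x) + F d x);
      [intros; rewrite qsum_recr; reflexivity|].
    apply ex_RInt_plus_R; [apply IHd; intros|]; apply H; lia.
Qed.

Lemma RInt_qsum d (F : nat -> R -> R) a b : (forall i, (i < d)%nat -> ex_RInt (F i) a b) ->
  RInt (fun x => qsum d (fun i => F i x)) a b = qsum d (fun i => RInt (F i) a b).
Proof.
  induction d; intros H.
  - rewrite qsum_0, (RInt_ext _ (fun _ => 0)), RInt_const; [|reflexivity].
    unfold scal; simpl; unfold mult; simpl; ring.
  - rewrite (RInt_ext _ (fun x => qsum d (fun i => F i x) + F d x));
      [|intros; rewrite qsum_recr; reflexivity].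
    assert (Hd : forall i, (i < d)%nat -> ex_RInt (F i) a b) by (intros; apply H; lia).
    rewrite RInt_plus_R, IHd, qsum_recr; auto. apply ex_RInt_qsum; assumption.
Qed.

Definition inj_on (m : nat) (z : nat -> R) : Prop :=
  forall i j, (i < m)%nat -> (j < m)%nat -> z i = z j -> i = j.

Definition indices_except (m i : nat) : list nat := seq 0 i ++ seq (S i) (m - S i).

Lemma In_indices_except j m i : (i < m)%nat ->
  In j (indices_except m i) <-> (j < m /\ j <> i)%nat.
Proof. intros H. unfold indices_except. rewrite in_app_iff, !in_seq. lia. Qed.

Lemma length_indices_except m i : (i < m)%nat -> length (indices_except m i) = (m - 1)%nat.
Proof. intros H. unfold indices_except. rewrite length_app, !length_seq. lia. Qed.

Definition lagrange_basis (z : nat -> R) (m i : nat) (y : R) : R :=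
  lprod (indices_except m i) (fun j => (y - z j) / (z i - z j)).

Definition lagrange (z : nat -> R) (m : nat) (f : R -> R) (y : R) : R :=
  qsum m (fun i => f (z i) * lagrange_basis z m i y).

Definition node_poly (z : nat -> R) (m : nat) (y : R) : R := lprod (seq 0 m) (fun j => y - z j).

Lemma lagrange_basis_same z m i : inj_on m z -> (i < m)%nat -> lagrange_basis z m i (z i) = 1.
Proof.
  intros Hz Hi. apply lprod_eq_1. intros j Hj. apply In_indices_except in Hj; auto.
  field. intros E. apply Rminus_diag_uniq in E. apply Hz in E; lia.
Qed.

Lemma lagrange_basis_other z m i k : (i < m)%nat -> (k < m)%nat -> k <> i ->
  lagrange_basis z m i (z k) = 0.
Proof.
  intros Hi Hk Hki. apply (lprod_eq_0 _ _ k); [apply In_indices_except; auto|].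
  unfold Rdiv. rewrite Rminus_diag. ring.
Qed.

Lemma poly_lt_lagrange_basis z m i : (i < m)%nat -> poly_lt m (lagrange_basis z m i).
Proof.
  intros Hi. unfold lagrange_basis.
  replace m with (S (length (indices_except m i))) at 1 by (rewrite length_indices_except; lia).
  apply poly_lt_lprod. intros j _.
  apply poly_lt_ext with (fun y => / (z i - z j) * y + - z j / (z i - z j));
    [apply poly_lt_affine | intros; unfold Rdiv; ring].
Qed.

Lemma poly_lt_lagrange z m f : poly_lt m (lagrange z m f).
Proof. apply poly_lt_qsum. intros. apply poly_lt_scal, poly_lt_lagrange_basis; assumption. Qed.

Lemma lagrange_node z m f k : inj_on m z -> (k < m)%nat -> lagrange z m f (z k) = f (z k).
Proof.
  intros Hz Hk. unfold lagrange. rewrite (qsum_single m k), lagrange_basis_same; auto; [ring|].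
  intros i Hi Hik. rewrite lagrange_basis_other; auto; ring.
Qed.

Lemma monic_node_poly z m : monic_poly m (node_poly z m).
Proof. unfold node_poly. rewrite <- (length_seq m 0) at 1. apply monic_poly_lprod. Qed.

Lemma node_poly_node z m k : (k < m)%nat -> node_poly z m (z k) = 0.
Proof. intros Hk. apply (lprod_eq_0 _ _ k); [apply in_seq; lia | ring]. Qed.

Definition has_zeros (g : R -> R) (L U : R) (k : nat) : Prop :=
  exists l, NoDup l /\ length l = k /\ forall y, In y l -> L <= y <= U /\ g y = 0.

Lemma In_list_max (l : list R) : l <> nil -> exists M, In M l /\ forall y, In y l -> y <= M.
Proof.
  induction l as [|a l IH]; intros H; [congruence|].
  destruct l as [|b l'].
  - exists a. split; [left; auto | intros y [<-|[]]; lra].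
  - destruct IH as [M [HM HM']]; [congruence|].
    destruct (Rle_dec a M).
    + exists M. split; [right; auto | intros y [<-|Hy]; auto].
    + exists a. split; [left; auto|]. intros y [<-|Hy]; [lra|]. specialize (HM' y Hy). lra.
Qed.

Lemma NoDup_remove_max (l : list R) : NoDup l -> l <> nil ->
  exists M r, In M l /\ NoDup r /\ S (length r) = length l /\
    forall y, In y r -> In y l /\ y < M.
Proof.
  intros Hnd Hl. destruct (In_list_max l Hl) as [M [HM HMax]].
  destruct (in_split _ _ HM) as [l1 [l2 ->]].
  destruct (NoDup_remove _ _ _ Hnd) as [Hnd' HnM].
  exists M, (l1 ++ l2). split; [|split; [|split]]; auto.
  - rewrite !length_app. simpl. lia.
  - intros y Hy. assert (Hyl : In y (l1 ++ M :: l2)).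
    { apply in_app_iff in Hy. apply in_app_iff. destruct Hy; [left | right; right]; auto. }
    split; [exact Hyl|]. destruct (Req_dec y M) as [->|]; [contradiction|].
    specialize (HMax y Hyl). lra.
Qed.

(* Rolle between the largest zero M and the largest remaining zero produces a
   zero of g' above all those obtained recursively: hence the invariant [y < v]. *)
Lemma rolle_zeros_below (g g' : R -> R) L U :
  (forall x, L <= x <= U -> is_derive g x (g' x)) ->
  forall l, NoDup l -> (forall y, In y l -> L <= y <= U /\ g y = 0) ->
  exists l', length l' = pred (length l) /\ NoDup l' /\
    forall y, In y l' -> (L <= y <= U /\ g' y = 0) /\ exists v, In v l /\ y < v.
Proof.
  intros Hd l. remember (length l) as n eqn:Hn. revert l Hn.
  induction n as [n IH] using (well_founded_induction Wf_nat.lt_wf).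
  intros l Hn Hnd Hz.
  destruct l as [|a0 l0].
  { exists nil. subst. split; [reflexivity | split; [constructor | intros y []]]. }
  destruct (NoDup_remove_max (a0 :: l0) Hnd) as [M [r [HM [Hnd' [Hlen Hr]]]]]; [congruence|].
  rewrite <- Hn in Hlen.
  destruct r as [|r0 r'].
  { exists nil. simpl in Hlen. split; [simpl; lia | split; [constructor | intros y []]]. }
  destruct (IH (pred n) ltac:(lia) (r0 :: r') ltac:(lia) Hnd') as [l'' [Hl1 [Hl2 Hl3]]].
  { intros y Hy. apply Hz, Hr, Hy. }
  destruct (In_list_max (r0 :: r')) as [M2 [HM2 HM2']]; [congruence|].
  destruct (Hr M2 HM2) as [HM2l HM2M].
  destruct (Hz _ HM) as [HMLU HgM]. destruct (Hz _ HM2l) as [HM2LU HgM2].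
  destruct (MVT_cor2 g g' M2 M) as [rho [Hrho Hrho_in]]; [lra| |].
  { intros c Hc. apply is_derive_Reals, Hd. lra. }
  assert (Hg'r : g' rho = 0).
  { rewrite HgM, HgM2, Rminus_0_r in Hrho. symmetry in Hrho.
    apply Rmult_integral in Hrho as [|]; lra. }
  assert (Hbelow : forall y, In y l'' -> y <= M2).
  { intros y Hy. destruct (Hl3 y Hy) as [_ [v [Hv Hyv]]]. specialize (HM2' v Hv). lra. }
  exists (rho :: l''). split; [|split].
  - simpl. rewrite Hl1, <- Hlen. reflexivity.
  - constructor; auto. intros Hin. specialize (Hbelow _ Hin). lra.
  - intros y [<-|Hy].
    + split; [split; [lra | auto] | exists M; split; auto; lra].
    + destruct (Hl3 y Hy) as [H1 [v [Hv Hyv]]]. split; [exact H1|]. exists v. split; [apply Hr|]; auto.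
Qed.

Lemma has_zeros_derive (g g' : R -> R) L U k :
  (forall x, L <= x <= U -> is_derive g x (g' x)) ->
  has_zeros g L U (S k) -> has_zeros g' L U k.
Proof.
  intros Hd [l [Hnd [Hl Hz]]].
  destruct (rolle_zeros_below g g' L U Hd l Hnd Hz) as [l' [Hl' [Hnd' Hz']]].
  exists l'. rewrite Hl', Hl. repeat split; auto; apply Hz'; assumption.
Qed.

Lemma has_zeros_derive_chain m (G : nat -> R -> R) L U :
  derive_chain (fun x => L <= x <= U) G -> has_zeros (G O) L U (S m) ->
  exists xi, L <= xi <= U /\ G m xi = 0.
Proof.
  revert G. induction m; intros G Hd Hz.
  - destruct Hz as [[|y l] [_ [Hl Hz]]]; [discriminate|]. exists y. apply Hz. left; auto.
  - apply (IHm (fun i => G (S i))); [intros i x Hx; apply Hd, Hx|].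
    apply has_zeros_derive with (G O); [intros; apply Hd; assumption | exact Hz].
Qed.

Lemma has_zeros_nodes (g : R -> R) L U m z x :
  inj_on m z -> (forall i, (i < m)%nat -> L <= z i <= U) -> L <= x <= U ->
  (forall k, (k < m)%nat -> x <> z k) ->
  g x = 0 -> (forall k, (k < m)%nat -> g (z k) = 0) -> has_zeros g L U (S m).
Proof.
  intros Hz HzLU Hx Hxz Hgx Hgz. exists (x :: map z (seq 0 m)). split; [|split].
  - constructor.
    + intros Hin. apply in_map_iff in Hin as [k [Hk1 Hk2]]. apply in_seq in Hk2.
      apply (Hxz k); [lia | auto].
    + apply NoDup_map_NoDup_ForallPairs; [|apply seq_NoDup].
      intros i j Hi Hj E. apply in_seq in Hi, Hj. apply Hz; auto; lia.
  - simpl. rewrite length_map, length_seq. reflexivity.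
  - intros y [<-|Hy]; [auto|].
    apply in_map_iff in Hy as [k [<- Hk]]. apply in_seq in Hk.
    split; [apply HzLU | apply Hgz]; lia.
Qed.

Lemma monic_poly_neq_0 m W z L U x :
  monic_poly m W -> inj_on m z -> (forall i, (i < m)%nat -> L <= z i <= U) ->
  (forall i, (i < m)%nat -> W (z i) = 0) ->
  L <= x <= U -> (forall k, (k < m)%nat -> x <> z k) -> W x <> 0.
Proof.
  intros HW Hz HzLU HWz Hx Hxz HWx.
  destruct (monic_derive_chain _ _ HW) as [G [HG [HG0 HGm]]].
  destruct (has_zeros_derive_chain m G L U) as [xi [_ Hxi]].
  - intros i y _. apply HG; auto.
  - apply (has_zeros_nodes _ L U m z x); auto; [rewrite HG0 | intros; rewrite HG0]; auto.
  - rewrite HGm in Hxi. apply (INR_fact_neq_0 m), Hxi.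
Qed.

Lemma lagrange_error (F : nat -> R -> R) m z L U x W :
  derive_chain (fun y => L <= y <= U) F ->
  inj_on m z -> (forall i, (i < m)%nat -> L <= z i <= U) -> L <= x <= U ->
  monic_poly m W -> (forall i, (i < m)%nat -> W (z i) = 0) ->
  exists xi, L <= xi <= U /\
    F O x - lagrange z m (F O) x = W x * F m xi / INR (Factorial.fact m).
Proof.
  intros HF Hz HzLU Hx HW HWz.
  destruct (classic (exists k, (k < m)%nat /\ x = z k)) as [[k [Hk ->]]|Hnode].
  { exists (z k). split; [apply HzLU; auto|]. rewrite lagrange_node, HWz; auto.
    unfold Rdiv; ring. }
  assert (Hxz : forall k, (k < m)%nat -> x <> z k) by (intros k Hk E; apply Hnode; eauto).
  assert (HWx : W x <> 0) by (apply (monic_poly_neq_0 m W z L U); auto).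
  set (K := (F O x - lagrange z m (F O) x) / W x).
  destruct (poly_lt_derive_chain _ _ (poly_lt_lagrange z m (F O))) as [P [HP [HP0 HPm]]].
  destruct (monic_derive_chain _ _ HW) as [G [HG [HG0 HGm]]].
  destruct (has_zeros_derive_chain m (fun i y => F i y - P i y - K * G i y) L U)
    as [xi [Hxi Hxi0]].
  - intros i y Hy. apply is_derive_minus_R; [apply is_derive_minus_R|].
    + apply HF, Hy.
    + apply HP; auto.
    + apply is_derive_scal, HG; auto.
  - apply (has_zeros_nodes _ L U m z x); auto.
    + rewrite HP0, HG0. unfold K. field; auto.
    + intros k Hk. rewrite HP0, HG0, lagrange_node, HWz; auto. ring.
  - exists xi. split; auto. rewrite HPm, HGm in Hxi0; auto.
    assert (Hf := INR_fact_neq_0 m).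
    replace (F O x - lagrange z m (F O) x) with (K * W x) by (unfold K; field; auto).
    replace K with (F m xi / INR (Factorial.fact m)) by (field_simplify_eq; auto; lra).
    field; auto.
Qed.

Definition kernel_exp (al : R) (m i : nat) : R := al - 1 - INR m + INR i.

(* [kernel_deriv t al m] is the m-th derivative of x |-> e^(-tx) x^(al-1), written as
   e^(-tx) * sum_(i <= m) c_(m,i) x^(al-1-m+i); differentiating each term gives the
   recursion for c. *)
Fixpoint kernel_coef (t al : R) (m i : nat) : R :=
  match m with
  | O => match i with O => 1 | _ => 0 end
  | S m' => (match i with O => 0 | S i' => - t * kernel_coef t al m' i' end)
            + kernel_coef t al m' i * kernel_exp al m' i
  end.

Definition kernel_sum (t al : R) (m : nat) (x : R) : R :=
  qsum (S m) (fun i => kernel_coef t al m i * Rpower x (kernel_exp al m i)).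

Definition kernel_deriv (t al : R) (m : nat) (x : R) : R := exp (- t * x) * kernel_sum t al m x.

Lemma kernel_exp_S al m i : kernel_exp al (S m) i = kernel_exp al m i - 1.
Proof. unfold kernel_exp. rewrite S_INR. ring. Qed.

Lemma kernel_exp_SS al m i : kernel_exp al (S m) (S i) = kernel_exp al m i.
Proof. unfold kernel_exp. rewrite !S_INR. ring. Qed.

Lemma kernel_coef_gt t al m i : (m < i)%nat -> kernel_coef t al m i = 0.
Proof.
  revert i. induction m; intros i H; simpl; destruct i; try lia; [reflexivity|].
  rewrite IHm, (IHm (S i)); [ring | lia | lia].
Qed.

Lemma kernel_sum_S t al m x :
  kernel_sum t al (S m) x =
  qsum (S m) (fun i => kernel_coef t al m i * (kernel_exp al m i * Rpower x (kernel_exp al m i - 1)))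
  - t * kernel_sum t al m x.
Proof.
  unfold kernel_sum. cbn [kernel_coef].
  rewrite (qsum_ext _ _ (fun i =>
      (match i with O => 0 | S i' => - t * kernel_coef t al m i' end) * Rpower x (kernel_exp al (S m) i)
      + kernel_coef t al m i * (kernel_exp al m i * Rpower x (kernel_exp al m i - 1))));
    [|intros; rewrite kernel_exp_S; ring].
  rewrite qsum_plus, qsum_recl, (qsum_recr (S m) (fun i => kernel_coef t al m i * _)).
  rewrite kernel_coef_gt by lia.
  rewrite (qsum_ext (S m) (fun i => - t * kernel_coef t al m i * Rpower x (kernel_exp al (S m) (S i)))
    (fun i => - t * (kernel_coef t al m i * Rpower x (kernel_exp al m i))))
    by (intros; rewrite kernel_exp_SS; ring).
  rewrite qsum_scal. ring.
Qed.

Lemma kernel_sum_derive t al m x : 0 < x ->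
  is_derive (kernel_sum t al m) x (kernel_sum t al (S m) x + t * kernel_sum t al m x).
Proof.
  intros Hx. rewrite kernel_sum_S. replace (_ - _ + _) with
    (qsum (S m) (fun i =>
       kernel_coef t al m i * (kernel_exp al m i * Rpower x (kernel_exp al m i - 1))))
    by ring.
  apply is_derive_qsum. intros i _. apply is_derive_scal, is_derive_Reals.
  apply derivable_pt_lim_power; assumption.
Qed.

Lemma kernel_deriv_chain t al : derive_chain (fun x => 0 < x) (kernel_deriv t al).
Proof.
  intros m x Hx. unfold kernel_deriv.
  assert (He : is_derive (fun y => exp (- t * y)) x (- t * exp (- t * x))) by (auto_derive; auto; ring).
  replace (exp (- t * x) * kernel_sum t al (S m) x) with
    (- t * exp (- t * x) * kernel_sum t al m x
     + exp (- t * x) * (kernel_sum t al (S m) x + t * kernel_sum t al m x)) by ring.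
  apply (is_derive_mult_R (fun y => exp (- t * y)) (kernel_sum t al m));
    [exact He | apply kernel_sum_derive, Hx].
Qed.

Lemma kernel_deriv_0 t al x : kernel_deriv t al 0 x = exp (- t * x) * Rpower x (al - 1).
Proof.
  unfold kernel_deriv, kernel_sum, kernel_exp. rewrite qsum_recr, qsum_0. simpl.
  replace (al - 1 - 0 + 0) with (al - 1) by ring. ring.
Qed.

Lemma INR_fact_pos i : 0 < INR (Factorial.fact i).
Proof. apply lt_0_INR, Factorial.lt_O_fact. Qed.

Definition coef_majorant (t : R) (m i : nat) : R :=
  INR (Factorial.fact m) / INR (Factorial.fact i) * t ^ i.

Lemma coef_majorant_nonneg t m i : 0 < t -> 0 <= coef_majorant t m i.
Proof.
  intros Ht. apply Rmult_le_pos; [|apply pow_le; lra].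
  apply Rlt_le, Rdiv_lt_0_compat; apply INR_fact_pos.
Qed.

Lemma coef_majorant_0 t m : coef_majorant t (S m) 0 = coef_majorant t m 0 * INR (S m).
Proof.
  unfold coef_majorant. change (Factorial.fact (S m)) with (S m * Factorial.fact m)%nat.
  rewrite mult_INR. simpl. field.
Qed.

Lemma coef_majorant_r t m i : coef_majorant t m (S i) = coef_majorant t m i * t / INR (S i).
Proof.
  unfold coef_majorant. change (Factorial.fact (S i)) with (S i * Factorial.fact i)%nat.
  change (t ^ S i) with (t * t ^ i). rewrite mult_INR.
  assert (H := INR_fact_pos i). assert (0 < INR (S i)) by (apply lt_0_INR; lia).
  field. lra.
Qed.

Lemma coef_majorant_SS t m i :
  coef_majorant t (S m) (S i) = coef_majorant t m i * t * INR (S m) / INR (S i).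
Proof.
  rewrite !coef_majorant_r. unfold coef_majorant.
  change (Factorial.fact (S m)) with (S m * Factorial.fact m)%nat. rewrite mult_INR.
  assert (H := INR_fact_pos i). assert (0 < INR (S i)) by (apply lt_0_INR; lia).
  field. lra.
Qed.

(* The induction only uses |al - 1 - m + i| <= m - i, valid for 0 < al < 1, i <= m. *)
Lemma kernel_coef_bound t al m i : 0 < t -> 0 < al < 1 ->
  Rabs (kernel_coef t al m i) <= coef_majorant t m i.
Proof.
  intros Ht Hal. revert i. induction m; intros i.
  - destruct i; simpl; [unfold coef_majorant; simpl; rewrite Rabs_R1; lra|].
    rewrite Rabs_R0. apply coef_majorant_nonneg, Ht.
  - destruct i as [|i]; simpl kernel_coef.
    + rewrite Rplus_0_l, Rabs_mult, coef_majorant_0.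
      apply Rmult_le_compat; try apply Rabs_pos; [apply IHm|].
      unfold kernel_exp. rewrite S_INR. assert (0 <= INR m) by apply pos_INR.
      simpl INR. rewrite Rabs_left1; lra.
    + eapply Rle_trans; [apply Rabs_triang|].
      rewrite !Rabs_mult, Rabs_Ropp, (Rabs_pos_eq t) by lra.
      assert (HB := coef_majorant_nonneg t m i Ht).
      destruct (Compare_dec.le_lt_dec (S i) m) as [Him|Him].
      * assert (Hi : INR (S i) <= INR m) by (apply le_INR; lia).
        assert (Habs : Rabs (kernel_exp al m (S i)) <= INR m - INR i).
        { unfold kernel_exp. rewrite S_INR in *. rewrite Rabs_left1; lra. }
        assert (H2 := IHm (S i)). rewrite coef_majorant_r in H2. rewrite coef_majorant_SS.
        assert (0 < INR (S i)) by (apply lt_0_INR; lia).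
        apply Rle_trans with (t * coef_majorant t m i
                              + coef_majorant t m i * t / INR (S i) * (INR m - INR i)).
        -- apply Rplus_le_compat; [apply Rmult_le_compat_l; [lra | apply IHm]|].
           apply Rmult_le_compat; try apply Rabs_pos; assumption.
        -- right. rewrite !S_INR in *. field. lra.
      * rewrite (kernel_coef_gt t al m (S i)), Rabs_R0, Rmult_0_l, Rplus_0_r by lia.
        destruct (Nat.eq_dec i m) as [->|Hi].
        -- rewrite coef_majorant_SS.
           apply Rle_trans with (t * coef_majorant t m m);
             [apply Rmult_le_compat_l; [lra | apply IHm]|].
           right. field. apply not_0_INR. lia.
        -- rewrite (kernel_coef_gt t al m i), Rabs_R0, Rmult_0_r by lia.
           apply coef_majorant_nonneg, Ht.
Qed.

Lemma kernel_deriv_bound t al m x : 0 < t -> 0 < al < 1 -> 0 < x ->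
  Rabs (kernel_deriv t al m x) <= INR (Factorial.fact m) * Rpower x (al - 1 - INR m).
Proof.
  intros Ht Hal Hx. set (A := INR (Factorial.fact m) * Rpower x (al - 1 - INR m)).
  assert (HA : 0 < A) by (apply Rmult_lt_0_compat; [apply INR_fact_pos | apply exp_pos]).
  assert (He := exp_pos (- t * x)).
  unfold kernel_deriv, kernel_sum. rewrite Rabs_mult, (Rabs_pos_eq (exp _)) by lra.
  apply Rle_trans
    with (exp (- t * x) * (A * sum_f_R0 (fun i => (t * x) ^ i / INR (Factorial.fact i)) m)).
  - apply Rmult_le_compat_l; [lra|].
    eapply Rle_trans; [apply qsum_abs|]. rewrite <- qsum_sum_f_R0, <- qsum_scal.
    apply qsum_le. intros i Hi.
    rewrite Rabs_mult, (Rabs_pos_eq (Rpower _ _)) by (apply Rlt_le, exp_pos).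
    replace (A * ((t * x) ^ i / INR (Factorial.fact i)))
      with (coef_majorant t m i * Rpower x (kernel_exp al m i)).
    + apply Rmult_le_compat_r; [apply Rlt_le, exp_pos | apply kernel_coef_bound; assumption].
    + unfold A, coef_majorant, kernel_exp. rewrite Rpower_plus, Rpower_pow, Rpow_mult_distr by lra.
      assert (H := INR_fact_pos i). field. lra.
  - assert (Hs := exp_ge_taylor (t * x) m ltac:(nra)).
    apply Rle_trans with (exp (- t * x) * (A * exp (t * x))).
    + apply Rmult_le_compat_l; [lra|]. apply Rmult_le_compat_l; lra.
    + replace (exp (- t * x) * (A * exp (t * x))) with (A * exp (- t * x + t * x))
        by (rewrite exp_plus; ring).
      replace (- t * x + t * x) with 0 by ring. rewrite exp_0. lra.
Qed.

Fixpoint cheb (k : nat) (y : R) : R :=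
  match k with
  | O => 1
  | S k' => match k' with O => y | S k'' => 2 * y * cheb k' y - cheb k'' y end
  end.

Lemma cheb_SS k y : cheb (S (S k)) y = 2 * y * cheb (S k) y - cheb k y.
Proof. reflexivity. Qed.

Lemma cheb_cos k th : cheb k (cos th) = cos (INR k * th).
Proof.
  enough (H : cheb k (cos th) = cos (INR k * th) /\ cheb (S k) (cos th) = cos (INR (S k) * th))
    by apply H.
  induction k as [|k [IH1 IH2]].
  - simpl. rewrite Rmult_0_l, cos_0, Rmult_1_l. auto.
  - split; [exact IH2|]. rewrite cheb_SS, IH1, IH2.
    replace (INR (S (S k)) * th) with (INR (S k) * th + th) by (rewrite (S_INR (S k)); ring).
    replace (INR k * th) with (INR (S k) * th - th) by (rewrite S_INR; ring).
    rewrite cos_plus, cos_minus. ring.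
Qed.

Lemma cheb_bound k y : -1 <= y <= 1 -> Rabs (cheb k y) <= 1.
Proof. intros H. rewrite <- (cos_acos y H), cheb_cos. apply Rabs_le, COS_bound. Qed.

Lemma cheb_affine_lead k u v :
  poly_lt (S k) (fun x => cheb (S k) (u * x + v) - 2 ^ k * u ^ S k * x ^ S k).
Proof.
  enough (H : poly_lt (S k) (fun x => cheb (S k) (u * x + v) - 2 ^ k * u ^ S k * x ^ S k) /\
    poly_lt (S (S k)) (fun x => cheb (S (S k)) (u * x + v) - 2 ^ S k * u ^ S (S k) * x ^ S (S k)))
    by apply H.
  induction k as [|k [IH1 IH2]].
  - split.
    + apply poly_lt_ext with (fun _ => v); [apply poly_lt_const; lia | intros; simpl; ring].
    + apply poly_lt_ext with (fun x => 4 * u * v * x + (2 * v * v - 1));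
        [apply poly_lt_affine | intros; simpl; ring].
  - split; [exact IH2|].
    apply poly_lt_ext with (fun x =>
      (2 * u * x + 2 * v) * (cheb (S (S k)) (u * x + v) - 2 ^ S k * u ^ S (S k) * x ^ S (S k))
      + 2 * v * 2 ^ S k * u ^ S (S k) * x ^ S (S k)
      + -1 * (cheb (S k) (u * x + v) - 2 ^ k * u ^ S k * x ^ S k)
      + - 2 ^ k * u ^ S k * x ^ S k).
    + repeat apply poly_lt_plus.
      * replace (S (S (S k))) with (2 + S (S k) - 1)%nat by lia.
        apply poly_lt_mult; [apply poly_lt_affine | exact IH2].
      * apply poly_lt_monomial; lia.
      * apply poly_lt_scal, poly_lt_le with (S k); [lia | exact IH1].
      * apply poly_lt_monomial; lia.
    + intros x. rewrite (cheb_SS (S k)). simpl pow. ring.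
Qed.

Definition cheb_shifted (n : nat) (c h x : R) : R := 2 * (h / 2) ^ n * cheb n ((x - c) / h).

Definition cheb_node (n : nat) (c h : R) (j : nat) : R :=
  c + h * cos ((2 * INR j + 1) * PI / (2 * INR n)).

Lemma monic_cheb_shifted n c h : (0 < n)%nat -> 0 < h -> monic_poly n (cheb_shifted n c h).
Proof.
  intros Hn Hh. destruct n as [|n]; [lia|].
  exists (fun x => 2 * (h / 2) ^ S n *
    (cheb (S n) (/ h * x + - c / h) - 2 ^ n * (/ h) ^ S n * x ^ S n)).
  split; [apply poly_lt_scal, cheb_affine_lead|].
  intros x. unfold cheb_shifted. replace ((x - c) / h) with (/ h * x + - c / h) by (field; lra).
  assert (E : 2 * (h / 2) ^ S n * (2 ^ n * (/ h) ^ S n) = 1).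
  { replace (2 * (h / 2) ^ S n * (2 ^ n * (/ h) ^ S n)) with ((2 * (h / 2) * / h) ^ S n)
      by (rewrite !Rpow_mult_distr; simpl; ring).
    replace (2 * (h / 2) * / h) with 1 by (field; lra). apply pow1. }
  rewrite <- (Rmult_1_l (x ^ S n)) at 1. rewrite <- E. ring.
Qed.

Lemma cheb_shifted_node n c h j : (0 < n)%nat -> 0 < h -> cheb_shifted n c h (cheb_node n c h j) = 0.
Proof.
  intros Hn Hh. unfold cheb_shifted, cheb_node.
  replace ((c + h * cos ((2 * INR j + 1) * PI / (2 * INR n)) - c) / h)
    with (cos ((2 * INR j + 1) * PI / (2 * INR n))) by (field; lra).
  rewrite cheb_cos. replace (INR n * ((2 * INR j + 1) * PI / (2 * INR n)))
    with (IZR (Z.of_nat j) * PI + PI / 2).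
  - rewrite cos_eq_0_1; [ring | eauto].
  - rewrite <- INR_IZR_INZ. assert (0 < INR n) by (apply lt_0_INR; lia). field. lra.
Qed.

Lemma cheb_shifted_bound n c h x : 0 < h -> c - h <= x <= c + h ->
  Rabs (cheb_shifted n c h x) <= 2 * (h / 2) ^ n.
Proof.
  intros Hh Hx. unfold cheb_shifted.
  assert (HM : 0 < 2 * (h / 2) ^ n) by (apply Rmult_lt_0_compat; [lra | apply pow_lt; lra]).
  rewrite Rabs_mult, (Rabs_pos_eq (2 * _)) by lra.
  rewrite <- (Rmult_1_r (2 * (h / 2) ^ n)) at 2. apply Rmult_le_compat_l; [lra|].
  apply cheb_bound. split.
  - apply Rmult_le_reg_r with h; [lra|]. unfold Rdiv. rewrite Rmult_assoc, Rinv_l; lra.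
  - apply Rmult_le_reg_r with h; [lra|]. unfold Rdiv. rewrite Rmult_assoc, Rinv_l; lra.
Qed.

Lemma cheb_node_range n c h j : 0 <= h -> c - h <= cheb_node n c h j <= c + h.
Proof.
  intros Hh. unfold cheb_node. assert (H := COS_bound ((2 * INR j + 1) * PI / (2 * INR n))). nra.
Qed.

Lemma cheb_angle_lt n i j : (i < j)%nat -> (j < n)%nat ->
  0 <= (2 * INR i + 1) * PI / (2 * INR n) < (2 * INR j + 1) * PI / (2 * INR n) /\
  (2 * INR j + 1) * PI / (2 * INR n) <= PI.
Proof.
  intros Hij Hjn. assert (0 < INR n) by (apply lt_0_INR; lia).
  assert (INR i < INR j) by (apply lt_INR; auto). assert (INR (S j) <= INR n) by (apply le_INR; lia).
  rewrite S_INR in *. assert (0 <= INR i) by apply pos_INR. assert (Hpi := PI_RGT_0).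
  repeat split; unfold Rdiv.
  - apply Rmult_le_pos; [nra | apply Rlt_le, Rinv_0_lt_compat; lra].
  - apply Rmult_lt_compat_r; [apply Rinv_0_lt_compat; lra | nra].
  - apply Rmult_le_reg_r with (2 * INR n); [lra|]. rewrite Rmult_assoc, Rinv_l; nra.
Qed.

Lemma cheb_node_inj n c h : 0 < h -> inj_on n (cheb_node n c h).
Proof.
  intros Hh i j Hi Hj E. unfold cheb_node in E.
  assert (Ecos : forall p q, (p < q)%nat -> (q < n)%nat ->
    cos ((2 * INR q + 1) * PI / (2 * INR n)) < cos ((2 * INR p + 1) * PI / (2 * INR n))).
  { intros p q Hpq Hqn. destruct (cheb_angle_lt n p q Hpq Hqn) as [[H1 H2] H3].
    apply cos_decreasing_1; lra. }
  destruct (Nat.lt_trichotomy i j) as [H|[H|H]]; auto; exfalso;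
    [specialize (Ecos i j H Hj) | specialize (Ecos j i H Hi)]; nra.
Qed.

Definition quad_exact (n : nat) (a b : R) (s w : nat -> R) : Prop :=
  forall i, (i < 2 * n)%nat -> RInt (fun x => x ^ i) a b = qsum n (fun k => w k * s k ^ i).

Lemma quad_exact_poly_lt n a b s w g : quad_exact n a b s w -> poly_lt (2 * n) g ->
  RInt g a b = qsum n (fun k => w k * g (s k)).
Proof.
  intros He [c Hc].
  assert (Hmon : forall i, ex_RInt (fun x => x ^ i) a b).
  { intros i. apply ex_RInt_poly_lt with (S i).
    apply poly_lt_ext with (fun x => 1 * x ^ i); [apply poly_lt_monomial; lia | intros; ring]. }
  rewrite (RInt_ext _ (fun x => qsum (2 * n) (fun i => c i * x ^ i))) by (intros; apply Hc).
  rewrite RInt_qsum by (intros; apply ex_RInt_scal_R, Hmon).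
  rewrite (qsum_ext _ _ (fun i => qsum n (fun k => c i * (w k * s k ^ i))))
    by (intros i Hi; rewrite RInt_scal_R, He, <- qsum_scal; auto).
  rewrite qsum_swap. apply qsum_ext. intros k _. rewrite Hc, <- qsum_scal. apply qsum_ext. intros; ring.
Qed.

Lemma list_avoid_interval (l : list R) u v : u < v ->
  exists u' v', u <= u' < v' /\ v' <= v /\ forall x, u' < x < v' -> ~ In x l.
Proof.
  induction l as [|e l IH]; intros H.
  - exists u, v. repeat split; try lra. intros x _ [].
  - destruct (IH H) as [u1 [v1 [H1 [H2 H3]]]].
    destruct (Rle_dec e u1); [|destruct (Rle_dec v1 e)].
    + exists u1, v1. repeat split; try lra. intros x Hx [E|E]; [lra | apply (H3 x); auto].
    + exists u1, v1. repeat split; try lra. intros x Hx [E|E]; [lra | apply (H3 x); auto].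
    + exists u1, e. repeat split; try lra. intros x Hx [E|E]; [lra | apply (H3 x); auto; lra].
Qed.

Lemma exists_not_In (l : list R) u v : u < v -> exists d, u < d < v /\ ~ In d l.
Proof.
  intros H. destruct (list_avoid_interval l u v H) as [u' [v' [H1 [H2 H3]]]].
  exists ((u' + v') / 2). split; [lra | apply H3; lra].
Qed.

Lemma RInt_gt_0_on_subinterval h a b u v : (forall x, continuous h x) ->
  a <= u -> u < v -> v <= b ->
  (forall x, a < x < b -> 0 <= h x) -> (forall x, u < x < v -> 0 < h x) -> 0 < RInt h a b.
Proof.
  intros Hc Hau Huv Hvb Hge Hgt.
  assert (Ex : forall p q, ex_RInt h p q)
    by (intros; apply (ex_RInt_continuous (V := R_CompleteNormedModule)); auto).
  rewrite <- (RInt_Chasles h a u b), <- (RInt_Chasles h u v b); auto.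
  assert (0 <= RInt h a u) by (apply RInt_ge_0; auto; intros; apply Hge; lra).
  assert (0 <= RInt h v b) by (apply RInt_ge_0; auto; intros; apply Hge; lra).
  assert (0 < RInt h u v) by (apply RInt_gt_0; auto).
  unfold plus; simpl. lra.
Qed.

Section GaussQuadrature.

Variables (n : nat) (a b : R) (s w : nat -> R).
Hypotheses (Hab : a < b) (Hs : inj_on n s) (Hex : quad_exact n a b s w).

(* Integrating (x - s_k) l_k(x)^2, of degree 2n - 1, gives 0 by exactness; the
   integrand would have constant sign if s_k were outside (a, b). *)
Lemma quad_exact_nodes_inside k : (k < n)%nat -> a < s k < b.
Proof.
  intros Hk. set (g := fun x => (x - s k) * (lagrange_basis s n k x * lagrange_basis s n k x)).
  assert (Hg : poly_lt (2 * n) g).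
  { replace (2 * n)%nat with (2 + (n + n - 1) - 1)%nat by lia.
    apply poly_lt_mult; [|apply poly_lt_mult; apply poly_lt_lagrange_basis; assumption].
    apply poly_lt_ext with (fun x => 1 * x + - s k); [apply poly_lt_affine | intros; ring]. }
  assert (HI : RInt g a b = 0).
  { rewrite (quad_exact_poly_lt n a b s w g Hex Hg). apply qsum_eq_0. intros l Hl. unfold g.
    destruct (Nat.eq_dec l k) as [->|Hlk]; [ring|]. rewrite lagrange_basis_other; auto. ring. }
  destruct (list_avoid_interval (map s (seq 0 n)) a b Hab) as [u [v [Hu [Hv Hav]]]].
  assert (Hl : forall x, u < x < v -> 0 < lagrange_basis s n k x * lagrange_basis s n k x).
  { intros x Hx. apply Rlt_0_sqr. apply lprod_neq_0. intros j Hj. apply In_indices_except in Hj; auto.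
    unfold Rdiv. apply Rmult_integral_contrapositive_currified; [|apply Rinv_neq_0_compat].
    - intros E. apply (Hav x Hx), in_map_iff. exists j. split; [lra | apply in_seq; lia].
    - intros E. apply Rminus_diag_uniq, Hs in E; lia. }
  assert (Hc : forall x, continuous g x) by (intros; apply poly_lt_continuous with (2 * n)%nat, Hg).
  assert (Hsq : forall x, 0 <= lagrange_basis s n k x * lagrange_basis s n k x)
    by (intros; apply Rle_0_sqr).
  split; apply Rnot_le_lt; intros Hsk.
  - enough (0 < RInt g a b) by lra.
    apply (RInt_gt_0_on_subinterval g a b u v); auto; try lra; intros x Hx; unfold g.
    + apply Rmult_le_pos; [lra | apply Hsq].
    + apply Rmult_lt_0_compat; [lra | apply Hl, Hx].
  - enough (0 < RInt (fun x => -1 * g x) a b) by (rewrite RInt_scal_R in H;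
      [lra | apply (ex_RInt_continuous (V := R_CompleteNormedModule)); auto]).
    apply (RInt_gt_0_on_subinterval _ a b u v); auto; try lra.
    + intros x. apply (continuous_mult (fun _ => -1) g); [apply continuous_const | apply Hc].
    + intros x Hx. unfold g. specialize (Hsq x). nra.
    + intros x Hx. unfold g. specialize (Hl x Hx). nra.
Qed.

(* Every monic q of degree n is node_poly s n + r with deg r < n, and
   node_poly s n * r integrates to 0 because it vanishes at the nodes. *)
Lemma RInt_node_poly_sqr_le q : monic_poly n q ->
  RInt (fun x => node_poly s n x * node_poly s n x) a b <= RInt (fun x => q x * q x) a b.
Proof.
  intros [rq [Hrq Hq]]. destruct (monic_node_poly s n) as [rp [Hrp Hp]].
  set (P := node_poly s n). set (r := fun x => rq x - rp x).
  assert (Hr : poly_lt n r) by (apply poly_lt_minus; assumption).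
  assert (HP : poly_lt (S n) P) by apply monic_poly_lt, monic_node_poly.
  assert (HPr : poly_lt (2 * n) (fun x => P x * r x))
    by (apply poly_lt_le with (S n + n - 1)%nat; [lia | apply poly_lt_mult; assumption]).
  assert (HPr0 : RInt (fun x => P x * r x) a b = 0).
  { rewrite (quad_exact_poly_lt n a b s w _ Hex HPr). apply qsum_eq_0. intros k Hk.
    unfold P. rewrite node_poly_node; auto. ring. }
  assert (Ex : forall m f, poly_lt m f -> ex_RInt f a b) by (intros; eapply ex_RInt_poly_lt; eauto).
  assert (E1 : ex_RInt (fun x => P x * P x) a b) by (eapply Ex; apply poly_lt_mult; eauto).
  assert (E2 : ex_RInt (fun x => P x * r x) a b) by (eapply Ex; apply poly_lt_mult; eauto).
  assert (E3 : ex_RInt (fun x => r x * r x) a b) by (eapply Ex; apply poly_lt_mult; eauto).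
  assert (Hqq : forall x, q x * q x = (P x * P x + 2 * (P x * r x)) + r x * r x)
    by (intros; unfold P, r; rewrite Hq, Hp; ring).
  rewrite (RInt_ext _ _ a b (fun x _ => Hqq x)).
  assert (E4 : ex_RInt (fun x => 2 * (P x * r x)) a b) by (apply ex_RInt_scal_R, E2).
  rewrite RInt_plus_R by (try apply ex_RInt_plus_R; assumption).
  rewrite RInt_plus_R, RInt_scal_R, HPr0 by assumption.
  assert (0 <= RInt (fun x => r x * r x) a b)
    by (apply RInt_ge_0; [lra | auto | intros; apply Rle_0_sqr]).
  lra.
Qed.

End GaussQuadrature.

Lemma lagrange_error_le (F : nat -> R -> R) m z L U x W M :
  derive_chain (fun y => L <= y <= U) F ->
  inj_on m z -> (forall i, (i < m)%nat -> L <= z i <= U) -> L <= x <= U ->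
  monic_poly m W -> (forall i, (i < m)%nat -> W (z i) = 0) ->
  (forall y, L <= y <= U -> Rabs (F m y) <= M * INR (Factorial.fact m)) ->
  Rabs (F O x - lagrange z m (F O) x) <= M * Rabs (W x).
Proof.
  intros HF Hz HzLU Hx HW HWz HM.
  destruct (lagrange_error F m z L U x W) as [xi [Hxi ->]]; auto.
  assert (Hf := INR_fact_pos m). specialize (HM xi Hxi).
  unfold Rdiv. rewrite !Rabs_mult, Rabs_inv, (Rabs_pos_eq (INR _)) by lra.
  rewrite Rmult_assoc, (Rmult_comm M). apply Rmult_le_compat_l; [apply Rabs_pos|].
  apply Rmult_le_reg_r with (INR (Factorial.fact m)); [lra|].
  rewrite Rmult_assoc, Rinv_l by lra. lra.
Qed.

Lemma Rabs_mult_le_half_sqr u v : Rabs (u * v) <= / 2 * (u * u + v * v).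
Proof.
  rewrite Rabs_mult.
  assert (Hu : Rabs u * Rabs u = u * u) by (rewrite <- Rabs_mult; apply Rabs_pos_eq, Rle_0_sqr).
  assert (Hv : Rabs v * Rabs v = v * v) by (rewrite <- Rabs_mult; apply Rabs_pos_eq, Rle_0_sqr).
  assert (H := Rle_0_sqr (Rabs u - Rabs v)). unfold Rsqr in H. lra.
Qed.

Definition append_nodes (n : nat) (s y : nat -> R) (i : nat) : R :=
  if (i <? n)%nat then s i else y (i - n)%nat.

Lemma append_nodes_inj n s y : inj_on n s -> inj_on n y ->
  (forall k j, (k < n)%nat -> (j < n)%nat -> s k <> y j) -> inj_on (2 * n) (append_nodes n s y).
Proof.
  intros Hs Hy Hsy i i' Hi Hi' E. unfold append_nodes in E.
  destruct (Nat.ltb_spec i n), (Nat.ltb_spec i' n).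
  - apply Hs; auto.
  - exfalso. apply (Hsy i (i' - n)%nat); auto; lia.
  - exfalso. apply (Hsy i' (i - n)%nat); auto; lia.
  - apply Hy in E; lia.
Qed.

Section GaussError.

Variables (n : nat) (a b L U M : R) (s w y : nat -> R) (q : R -> R) (F : nat -> R -> R).
Hypotheses (HLa : L <= a) (Hab : a < b) (HbU : b <= U) (HM0 : 0 <= M)
  (Hs : inj_on n s) (Hex : quad_exact n a b s w)
  (Hq : monic_poly n q) (Hy : inj_on n y) (Hqy : forall j, (j < n)%nat -> q (y j) = 0)
  (HyLU : forall j, (j < n)%nat -> L <= y j <= U)
  (Hsy : forall k j, (k < n)%nat -> (j < n)%nat -> s k <> y j)
  (HF : derive_chain (fun x => L <= x <= U) F)
  (HM : forall x, L <= x <= U -> Rabs (F (2 * n)%nat x) <= M * INR (Factorial.fact (2 * n))).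

Let z := append_nodes n s y.
Let p := lagrange z (2 * n) (F O).

Lemma append_nodes_range i : (i < 2 * n)%nat -> L <= z i <= U.
Proof.
  intros Hi. unfold z, append_nodes. destruct (Nat.ltb_spec i n); [|apply HyLU; lia].
  destruct (quad_exact_nodes_inside n a b s w Hab Hs Hex i) as [H1 H2]; auto; lra.
Qed.

Lemma quad_interp_error_le x : L <= x <= U ->
  Rabs (F O x - p x) <= M / 2 * (node_poly s n x * node_poly s n x + q x * q x).
Proof.
  intros Hx. eapply Rle_trans.
  - apply (lagrange_error_le F (2 * n) z L U x (fun x => node_poly s n x * q x) M); auto.
    + apply append_nodes_inj; assumption.
    + apply append_nodes_range.
    + replace (2 * n)%nat with (n + n)%nat by lia.
      apply monic_poly_mult; [apply monic_node_poly | exact Hq].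
    + intros i Hi. unfold z, append_nodes. destruct (Nat.ltb_spec i n).
      * rewrite node_poly_node; auto; ring.
      * rewrite Hqy; [ring | lia].
  - unfold Rdiv. rewrite Rmult_assoc.
    apply Rmult_le_compat_l; [exact HM0 | apply Rabs_mult_le_half_sqr].
Qed.

Lemma quad_error_le :
  Rabs (RInt (F O) a b - qsum n (fun k => w k * F O (s k))) <= M * RInt (fun x => q x * q x) a b.
Proof.
  assert (Hcont : forall x, L <= x <= U -> continuous (F O) x)
    by (intros x Hx; apply (ex_derive_continuous (F O)); eexists; apply HF, Hx).
  assert (Hp : poly_lt (2 * n) p) by apply poly_lt_lagrange.
  assert (Hsum : qsum n (fun k => w k * F O (s k)) = RInt p a b).
  { rewrite (quad_exact_poly_lt n a b s w p Hex Hp). apply qsum_ext. intros k Hk.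
    replace (s k) with (z k) by (unfold z, append_nodes; destruct (Nat.ltb_spec k n); [auto | lia]).
    unfold p. rewrite lagrange_node; [reflexivity | apply append_nodes_inj; assumption | lia]. }
  set (P := node_poly s n).
  assert (HPs : poly_lt (S n + S n - 1) (fun x => P x * P x))
    by (apply poly_lt_mult; apply monic_poly_lt, monic_node_poly).
  assert (HQs : poly_lt (S n + S n - 1) (fun x => q x * q x))
    by (apply poly_lt_mult; apply monic_poly_lt, Hq).
  assert (ExPP := ex_RInt_poly_lt _ _ a b HPs). assert (ExQQ := ex_RInt_poly_lt _ _ a b HQs).
  assert (ExF : ex_RInt (F O) a b) by (apply ex_RInt_continuous_R; [lra | intros; apply Hcont; lra]).
  assert (Exp : ex_RInt p a b) by (eapply ex_RInt_poly_lt; eauto).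
  rewrite Hsum, <- RInt_minus_R by assumption.
  eapply Rle_trans; [apply abs_RInt_le; [lra | exact (ex_RInt_minus (F O) p a b ExF Exp)]|].
  apply Rle_trans with (RInt (fun x => M / 2 * (P x * P x) + M / 2 * (q x * q x)) a b).
  - apply RInt_le; [lra | | apply ex_RInt_plus_R; apply ex_RInt_scal_R; assumption |].
    + apply ex_RInt_continuous_R; [lra|]. intros x Hx.
      apply (continuous_Rabs_comp (fun x => F O x - p x)).
      apply continuous_minus_R; [apply Hcont; lra | eapply poly_lt_continuous; eauto].
    + intros x Hx. rewrite <- Rmult_plus_distr_l. apply quad_interp_error_le. lra.
  - rewrite RInt_plus_R by (apply ex_RInt_scal_R; assumption).
    rewrite (RInt_scal_R (fun x => P x * P x)), (RInt_scal_R (fun x => q x * q x)) by assumption.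
    assert (Horth := RInt_node_poly_sqr_le n a b s w Hab Hex q Hq). fold P in Horth.
    assert (M / 2 * RInt (fun x => P x * P x) a b <= M / 2 * RInt (fun x => q x * q x) a b)
      by (apply Rmult_le_compat_l; lra).
    lra.
Qed.

End GaussError.

Lemma RInt_cheb_shifted_sqr_le n a b c h : 0 < h -> a <= b -> c - h <= a -> b <= c + h ->
  RInt (fun x => cheb_shifted n c h x * cheb_shifted n c h x) a b <= (b - a) * (2 * (h / 2) ^ n) ^ 2.
Proof.
  intros Hh Hab Hca Hbc. eapply Rle_trans; [apply Rle_abs|].
  apply abs_RInt_le_const; [exact Hab | |].
  - destruct n as [|n].
    + apply ex_RInt_poly_lt with 1%nat.
      apply poly_lt_ext with (fun _ => 2 * 2);
        [apply poly_lt_const; lia | intros; unfold cheb_shifted; simpl; ring].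
    + apply ex_RInt_poly_lt with (S (S n) + S (S n) - 1)%nat.
      apply poly_lt_mult; apply monic_poly_lt, monic_cheb_shifted; [lia | exact Hh | lia | exact Hh].
  - intros x Hx. rewrite Rabs_mult, <- Rsqr_pow2.
    assert (Hq := cheb_shifted_bound n c h x Hh ltac:(lra)).
    assert (Hq0 := Rabs_pos (cheb_shifted n c h x)). unfold Rsqr.
    apply Rmult_le_compat; assumption.
Qed.

Lemma exists_cheb_center n (s : nat -> R) u v h : u < v ->
  exists c, u < c < v /\ forall k j, (k < n)%nat -> (j < n)%nat -> s k <> cheb_node n c h j.
Proof.
  intros Huv.
  destruct (exists_not_In
    (flat_map (fun k => map (fun j => s k - cheb_node n 0 h j) (seq 0 n)) (seq 0 n)) u v Huv)
    as [c [Hc HcB]].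
  exists c. split; [exact Hc|]. intros k j Hk Hj E. apply HcB, in_flat_map.
  exists k. split; [apply in_seq; lia|]. apply in_map_iff. exists j. split.
  - unfold cheb_node in *. lra.
  - apply in_seq. lia.
Qed.

Lemma quad_error_cheb n a b L U M h s w (F : nat -> R -> R) :
  (0 < n)%nat -> a < b -> (b - a) / 2 < h -> L <= (a + b) / 2 - h -> a + 2 * h <= U -> 0 <= M ->
  inj_on n s -> quad_exact n a b s w ->
  derive_chain (fun x => L <= x <= U) F ->
  (forall x, L <= x <= U -> Rabs (F (2 * n)%nat x) <= M * INR (Factorial.fact (2 * n))) ->
  Rabs (RInt (F O) a b - qsum n (fun k => w k * F O (s k))) <= M * ((b - a) * (2 * (h / 2) ^ n) ^ 2).
Proof.
  intros Hn Hab Hh HL HU HM0 Hs Hex HF HM.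
  destruct (exists_cheb_center n s ((a + b) / 2) (a + h) h) as [c [Hc Hsc]]; [lra|].
  eapply Rle_trans.
  - apply (quad_error_le n a b L U M s w (cheb_node n c h) (cheb_shifted n c h) F); try lra; auto.
    + apply monic_cheb_shifted; [exact Hn | lra].
    + apply cheb_node_inj; lra.
    + intros j _. apply cheb_shifted_node; [exact Hn | lra].
    + intros j _. assert (H := cheb_node_range n c h j ltac:(lra)). lra.
  - apply Rmult_le_compat_l; [exact HM0|]. apply RInt_cheb_shifted_sqr_le; lra.
Qed.

Lemma Rpower_le_nonpos_exp l x e : 0 < l <= x -> e <= 0 -> Rpower x e <= Rpower l e.
Proof.
  intros Hx He. replace e with (- - e) by ring. rewrite (Rpower_Ropp x (- e)), (Rpower_Ropp l (- e)).
  apply Rinv_le_contravar; [apply exp_pos | apply Rle_Rpower_l; lra].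
Qed.

Lemma Rpower_nine_tenths_le al : 0 < al < 1 -> Rpower (9 / 10) (al - 1) <= 10 / 9.
Proof.
  intros Hal. unfold Rminus. rewrite Rpower_plus, Rpower_Ropp, Rpower_1 by lra.
  assert (H1 : Rpower (9 / 10) al <= Rpower 1 al) by (apply Rle_Rpower_l; lra).
  unfold Rpower at 2 in H1. rewrite ln_1, Rmult_0_r, exp_0 in H1. lra.
Qed.

Lemma eleven_36_le : 11 / 36 <= exp (1 / exp 1) / 4.
Proof.
  assert (exp 1 <= 3) by apply exp_le_3. assert (0 < exp 1) by apply exp_pos.
  assert (1 / 3 <= 1 / exp 1) by (unfold Rdiv; rewrite !Rmult_1_l; apply Rinv_le_contravar; lra).
  assert (1 + 1 / exp 1 <= exp (1 / exp 1)) by apply exp_ineq1_le. lra.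
Qed.

Lemma forty_ninths_lt : 4 * (10 / 9) < 2 * sqrt 2 * PI.
Proof.
  assert (Hs : 14 / 10 < sqrt 2).
  { rewrite <- (sqrt_square (14 / 10)) by lra. apply sqrt_lt_1; lra. }
  assert (Hpi := PI2_1). nra.
Qed.

(* With L = 9a/10 and h = 11a/20, the ratio (h/2)/L = 11/36 drives the geometric decay. *)
Lemma kernel_error_constant a al n : 0 < a ->
  Rpower (9 * a / 10) (al - 1 - INR (2 * n)) * ((2 * a - a) * (2 * (11 * a / 20 / 2) ^ n) ^ 2)
  = 4 * Rpower (9 / 10) (al - 1) * Rpower a al * (11 / 36) ^ (2 * n).
Proof.
  intros Ha.
  replace (al - 1 - INR (2 * n)) with ((al - 1) + - INR (2 * n)) by ring.
  rewrite Rpower_plus, Rpower_Ropp, Rpower_pow by lra.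
  replace (9 * a / 10) with (9 / 10 * a) by field. rewrite <- Rpower_mult_distr by lra.
  replace (Rpower a (al - 1)) with (Rpower a al / a)
    by (unfold Rminus; rewrite Rpower_plus, Rpower_Ropp, Rpower_1; [field|]; lra).
  rewrite <- pow2_abs, (Rabs_pos_eq (2 * _)) by (apply Rmult_le_pos; [lra | apply pow_le; lra]).
  replace (11 * a / 20 / 2) with (11 / 36 * (9 / 10 * a)) by field.
  rewrite !Rpow_mult_distr, <- !pow_mult, !(Nat.mul_comm n 2).
  assert (0 < (9 / 10) ^ (2 * n)) by (apply pow_lt; lra).
  assert (0 < a ^ (2 * n)) by (apply pow_lt; lra).
  field. lra.
Qed.

Lemma kernel_error_constant_lt a al n : 0 < a -> 0 < al < 1 ->
  Rpower (9 * a / 10) (al - 1 - INR (2 * n)) * ((2 * a - a) * (2 * (11 * a / 20 / 2) ^ n) ^ 2)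
  < 2 * sqrt 2 * PI * Rpower a al * (exp (1 / exp 1) / 4) ^ (2 * n).
Proof.
  intros Ha Hal. rewrite kernel_error_constant by exact Ha.
  assert (H9 := Rpower_nine_tenths_le al Hal). assert (H9' := exp_pos ((al - 1) * ln (9 / 10))).
  assert (HA := exp_pos (al * ln a)). fold (Rpower a al) in HA. fold (Rpower (9 / 10) (al - 1)) in H9'.
  assert (HY : 0 < (11 / 36) ^ (2 * n)) by (apply pow_lt; lra).
  assert (HYZ : (11 / 36) ^ (2 * n) <= (exp (1 / exp 1) / 4) ^ (2 * n))
    by (apply pow_incr; split; [lra | apply eleven_36_le]).
  assert (HC := forty_ninths_lt).
  apply Rle_lt_trans with (4 * (10 / 9) * Rpower a al * (11 / 36) ^ (2 * n)).
  - repeat apply Rmult_le_compat_r; lra.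
  - apply Rlt_le_trans with (2 * sqrt 2 * PI * Rpower a al * (11 / 36) ^ (2 * n)).
    + repeat apply Rmult_lt_compat_r; lra.
    + apply Rmult_le_compat_l; [|exact HYZ].
      assert (0 < sqrt 2) by (apply sqrt_lt_R0; lra). assert (Hpi := PI_RGT_0). nra.
Qed.

Theorem lemma6 (j : Z) (n : nat) (s w : nat -> R) (alpha t : R) :
  (1 < n)%nat ->
  is_gauss_legendre n (powerRZ 2 j) (powerRZ 2 (j + 1)) s w ->
  0 < alpha < 1 ->
  0 < t ->
  Rabs (RInt (fun x => exp (- t * x) * Rpower x (alpha - 1))
              (powerRZ 2 j) (powerRZ 2 (j + 1))
        - qsum n (fun k => w k * Rpower (s k) (alpha - 1) * exp (- s k * t)))
  < 2 * sqrt 2 * PI * Rpower (powerRZ 2 j) alpha * (exp (1 / exp 1) / 4) ^ (2 * n).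
Proof.
  intros Hn [Hs [_ Hex]] Hal Ht.
  assert (Hb : powerRZ 2 (j + 1) = 2 * powerRZ 2 j) by (rewrite powerRZ_add by lra; simpl; ring).
  rewrite Hb in *. set (a := powerRZ 2 j) in *.
  assert (Ha : 0 < a) by (apply powerRZ_lt; lra).
  rewrite (RInt_ext _ (kernel_deriv t alpha 0) a (2 * a)
    (fun x _ => eq_sym (kernel_deriv_0 t alpha x))).
  rewrite (qsum_ext n _ (fun k => w k * kernel_deriv t alpha 0 (s k)))
    by (intros k _; rewrite kernel_deriv_0; replace (- s k * t) with (- t * s k) by ring; ring).
  eapply Rle_lt_trans; [|apply (kernel_error_constant_lt a alpha n Ha Hal)].
  apply (quad_error_cheb n a (2 * a) (9 * a / 10) (21 * a / 10) _ (11 * a / 20) s w); try lra.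
  - lia.
  - apply Rlt_le, exp_pos.
  - exact Hs.
  - exact Hex.
  - intros m x Hx. apply kernel_deriv_chain. lra.
  - intros x Hx. rewrite Rmult_comm.
    eapply Rle_trans; [apply kernel_deriv_bound; lra|].
    apply Rmult_le_compat_l; [apply Rlt_le, INR_fact_pos|].
    apply Rpower_le_nonpos_exp; [lra|]. assert (H := pos_INR (2 * n)). lra.
Qed.
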